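(* Consider a GNEP with $N$ players in which player $\nu$ solves $$\min_{x^\nu}\theta_\nu(x)\quad\text{s.t.}\quad g(x)\le0,\ h^\nu(x^\nu)\le0,$$ where $g:\mathbb{R}^n\to\mathbb{R}^m$ and $h^\nu:\mathbb{R}^{n_\nu}\to\mathbb{R}^{p_\nu}$ are continuously differentiable with convex components, and assume that this GNEP has feasible points (points $x$ with $g(x)\le0$ and $h^\nu(x^\nu)\le0$ for all $\nu$). If $\bar x$ is a KKT point of the corresponding Feasibility GNEP, then $g(\bar x)\le0$, i.e. $\bar x$ is feasible for the GNEP.
   Context: Variables: $x=(x^1,\ldots,x^N)\in\mathbb{R}^n$, $x^\nu\in\mathbb{R}^{n_\nu}$. $v_+=\max\{0,v\}$ componentwise; $\nabla_{x^\nu}$ is the partial (transposed) Jacobian w.r.t. $x^\nu$; $\min$ componentwise. The corresponding Feasibility GNEP: player $\nu$ solves $\min_{x^\nu}\|g_+(x)\|^2$ s.t. $h^\nu(x^\nu)\le0$. $\bar x$ is a KKT point of it if for every $\nu$ there is $w^\nu\in\mathbb{R}^{p_\nu}$ with $\nabla_{x^\nu}\|g_+(\bar x)\|^2+\nabla h^\nu(\bar x^\nu)w^\nu=0$ and $\min\{-h^\nu(\bar x^\nu),w^\nu\}=0$. *)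

From HB Require Import structures.
From mathcomp Require Import all_boot all_order all_algebra.
From mathcomp Require Import all_classical all_reals all_analysis.
Set Implicit Arguments. Unset Strict Implicit. Unset Printing Implicit Defensive.
Import Order.TTheory GRing.Theory Num.Theory.
Import numFieldNormedType.Exports.
Local Open Scope ring_scope.

(* Vectors of R^k are column vectors 'cV[R]_k; a point of R^n with
   n = n_1 + ... + n_N is x : 'cV[R]_(\sum_nu n_ nu), and the block of
   player nu is x^nu := submxcol x nu : 'cV[R]_(n_ nu). *)

Section Defs.
Variable R : realType.

Definition blk (N : nat) (n_ : 'I_N -> nat) (x : 'cV[R]_(\sum_(nu < N) n_ nu)) (nu : 'I_N)
  : 'cV[R]_(n_ nu) := submxcol x nu.

Definition convex_fun (k : nat) (f : 'cV[R]_k -> R) :=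
  forall (x y : 'cV[R]_k) (t : R), 0 <= t <= 1 ->
    f (t *: x + (1 - t) *: y) <= t * f x + (1 - t) * f y.

Definition convex_components (k m : nat) (g : 'cV[R]_k -> 'cV[R]_m) :=
  forall i : 'I_m, convex_fun (fun x => g x i ord0).

Definition C1 (k m : nat) (g : 'cV[R]_k -> 'cV[R]_m) :=
  (forall x, differentiable g x) /\
  (forall i : 'I_k, continuous (fun x => 'd g x (delta_mx i ord0))).

Definition grad (k : nat) (f : 'cV[R]_k -> R) (x : 'cV[R]_k) : 'cV[R]_k :=
  \col_i ('d f x (delta_mx i ord0)).

(* transposed Jacobian  \nabla h(x) = [\nabla h_1(x) ... \nabla h_p(x)] *)
Definition tjac (k p : nat) (h : 'cV[R]_k -> 'cV[R]_p) (x : 'cV[R]_k) : 'M[R]_(k, p) :=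
  \matrix_(i, j) ('d (fun y => h y j ord0) x (delta_mx i ord0)).

Definition vplus (m : nat) (v : 'cV[R]_m) : 'cV[R]_m := \col_i Num.max 0 (v i ord0).

Definition sqnorm (m : nat) (v : 'cV[R]_m) : R := \sum_i (v i ord0) ^+ 2.

Definition compl0 (p : nat) (a b : 'cV[R]_p) :=
  forall j : 'I_p, Num.min (a j ord0) (b j ord0) = 0.

Definition gnep_feasible (N : nat) (n_ p_ : 'I_N -> nat) (m : nat)
  (g : 'cV[R]_(\sum_(nu < N) n_ nu) -> 'cV[R]_m)
  (h : forall nu : 'I_N, 'cV[R]_(n_ nu) -> 'cV[R]_(p_ nu))
  (x : 'cV[R]_(\sum_(nu < N) n_ nu)) :=
  (forall i, g x i ord0 <= 0) /\ (forall nu j, h nu (blk x nu) j ord0 <= 0).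

(* KKT point of the Feasibility GNEP: player nu solves
   min_{x^nu} ||g_+(x)||^2  s.t.  h^nu(x^nu) <= 0 *)
Definition feas_kkt (N : nat) (n_ p_ : 'I_N -> nat) (m : nat)
  (g : 'cV[R]_(\sum_(nu < N) n_ nu) -> 'cV[R]_m)
  (h : forall nu : 'I_N, 'cV[R]_(n_ nu) -> 'cV[R]_(p_ nu))
  (xb : 'cV[R]_(\sum_(nu < N) n_ nu)) :=
  forall nu : 'I_N, exists w : 'cV[R]_(p_ nu),
    blk (grad (fun x => sqnorm (vplus (g x))) xb) nu
      + tjac (h nu) (blk xb nu) *m w = 0
    /\ compl0 (- h nu (blk xb nu)) w.

End Defs.

From HB Require Import structures.
From mathcomp Require Import all_boot all_order all_algebra.
From mathcomp Require Import all_classical all_reals all_analysis.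
From mathcomp Require Import ring lra.
Import Order.TTheory GRing.Theory Num.Theory.
Import numFieldNormedType.Exports.
Local Open Scope ring_scope.
Local Open Scope classical_set_scope.
Set Implicit Arguments. Unset Strict Implicit. Unset Printing Implicit Defensive.

(* The merit function phi(x) = ||g_+(x)||^2 is convex, differentiable and
   vanishes exactly on {g <= 0}, in particular at a feasible point y.  At a KKT
   point xb, the block nu of grad phi(xb) equals -(grad h^nu) w^nu; by convexity
   of h^nu and complementarity, w^nu . (grad h^nu)^T (y^nu - xb^nu) is bounded by
   w^nu . h^nu(y^nu) <= 0, so grad phi(xb)^T (y - xb) >= 0.  The gradient
   inequality for phi then gives 0 = phi(y) >= phi(xb), hence g(xb) <= 0. *)

Section FeasibilityGNEP.
Variable R : realType.

Definition vdot (k : nat) (u v : 'cV[R]_k) : R := \sum_i u i ord0 * v i ord0.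

Lemma vdotNl (k : nat) (u v : 'cV[R]_k) : vdot (- u) v = - vdot u v.
Proof. by rewrite /vdot -sumrN; apply: eq_bigr => i _; rewrite mxE mulNr. Qed.

Lemma vdot_blk (N : nat) (n_ : 'I_N -> nat) (u v : 'cV[R]_(\sum_(nu < N) n_ nu)) :
  vdot u v = \sum_nu vdot (blk u nu) (blk v nu).
Proof.
have /(congr1 (fun M : 'M[R]_1 => M ord0 ord0)) :
    u^T *m v = \sum_nu (blk u nu)^T *m blk v nu.
  by rewrite -{1}[u]submxcolK -{1}[v]submxcolK tr_mxcol mul_mxrow_mxcol.
rewrite summxE => uvE.
transitivity ((u^T *m v) ord0 ord0).
  by rewrite mxE; apply: eq_bigr => k _; rewrite mxE.
rewrite uvE; apply: eq_bigr => nu _; rewrite !mxE.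
by apply: eq_bigr => i _; rewrite !mxE.
Qed.

Lemma linear_col_sum (k : nat) (L : {linear 'cV[R]_k -> R^o}) (d : 'cV[R]_k) :
  L d = \sum_i d i ord0 * L (delta_mx i ord0).
Proof.
rewrite {1}[d]matrix_sum_delta linear_sum; apply: eq_bigr => i _.
by rewrite big_ord1 linearZ.
Qed.

Lemma diff_vdot_grad (k : nat) (f : 'cV[R]_k -> R) (x d : 'cV[R]_k) :
  'd f x d = vdot (grad f x) d.
Proof.
by rewrite linear_col_sum; apply: eq_bigr => i _; rewrite mxE mulrC.
Qed.

Lemma vdot_tjac (k p : nat) (h : 'cV[R]_k -> 'cV[R]_p) (x d : 'cV[R]_k)
    (w : 'cV[R]_p) :
  vdot (tjac h x *m w) d = \sum_j w j ord0 * 'd (fun y => h y j ord0) x d.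
Proof.
rewrite /vdot (eq_bigr (fun i => \sum_j w j ord0 *
    (d i ord0 * 'd (fun y => h y j ord0) x (delta_mx i ord0)))); last first.
  by move=> i _; rewrite !mxE mulr_suml; apply: eq_bigr => j _; rewrite !mxE; ring.
rewrite exchange_big; apply: eq_bigr => j _.
by rewrite linear_col_sum mulr_sumr.
Qed.

Lemma convex_fun_diff_le (k : nat) (f : 'cV[R]_k -> R) (x y : 'cV[R]_k) :
  convex_fun f -> differentiable f x -> 'd f x (y - x) <= f y - f x.
Proof.
move=> cvx_f df; rewrite -deriveE //.
have at_right_sub : (0:R)^'+ `=>` (0:R)^'.
  move=> A /= [e /= e0 eA]; exists e => //= t te t0; apply: eA => //.
  by rewrite gt_eqF.
have slope_cvg := cvg_trans (cvg_app _ at_right_sub) (diff_derivable df (v := y - x)).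
rewrite /derive -(cvg_lim _ slope_cvg) //.
apply: limr_le; first by apply/cvg_ex; eexists; exact: slope_cvg.
near=> t.
have t0 : 0 < t by near: t; exact: nbhs_right_gt.
have t1 : t < 1 by near: t; exact: nbhs_right_lt.
rewrite /= /shift.
have -> : t *: (y - x) + x = t *: y + (1 - t) *: x.
  by rewrite scalerBr scalerBl scale1r addrA addrAC.
have := cvx_f y x t; rewrite (ltW t0) (ltW t1) => /(_ isT) cvx_yx.
rewrite ler_pdivrMl // -subr_ge0.
have -> : t * (f y - f x) - (f (t *: y + (1 - t) *: x) - f x)
  = t * f y + (1 - t) * f x - f (t *: y + (1 - t) *: x) by ring.
by rewrite subr_ge0.
Unshelve. all: by end_near.
Qed.

Lemma differentiable_component (k p : nat) (h : 'cV[R]_k -> 'cV[R]_p)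
    (x : 'cV[R]_k) (j : 'I_p) :
  differentiable h x -> differentiable (fun y => h y j ord0) x.
Proof.
move=> dh.
exact: (differentiable_comp (g := fun M : 'cV[R]_p => M j ord0)) dh
  (differentiable_coord _ _ _).
Qed.

Lemma sqr_max0_remainder_le (t d : R) :
  `|Num.max 0 (d + t) ^+ 2 - Num.max 0 t ^+ 2 - 2 * Num.max 0 t * d| <= 2 * d ^+ 2.
Proof. by rewrite ler_norml; have [] := leP 0 t; have [] := leP 0 (d + t); nra. Qed.

Lemma differentiable_sqr_max0 (t : R) :
  differentiable (fun u : R => Num.max 0 u ^+ 2) t.
Proof.
apply/derivable1_diffP/cvg_ex; exists (2 * Num.max 0 t).
apply/cvgrPdist_lt => e e0; near=> d.
have d0 : d != 0 by near: d; exact: nbhs_dnbhs_neq.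
have de : `|d| < e / 2 by near: d; apply: dnbhs0_lt; rewrite divr_gt0.
rewrite /= /shift [_ *: 1]mulr1 [_ *: _]/(_ * _).
have := sqr_max0_remainder_le t d.
set D := Num.max 0 (d + t) ^+ 2 - Num.max 0 t ^+ 2; set b := Num.max 0 t.
move=> remainder_le.
have -> : 2 * b - d^-1 * D = - (d^-1 * (D - 2 * b * d)) by field.
rewrite normrN normrM normrV ?unitfE // ltr_pdivrMl ?normr_gt0 //.
apply: (le_lt_trans remainder_le).
have : 0 < `|d| by rewrite normr_gt0.
by rewrite -[d ^+ 2]real_normK ?num_real //; nra.
Unshelve. all: by end_near.
Qed.

Lemma sqr_max0_convex (a a1 a2 t : R) : 0 <= t <= 1 ->
  a <= t * a1 + (1 - t) * a2 ->
  Num.max 0 a ^+ 2 <= t * Num.max 0 a1 ^+ 2 + (1 - t) * Num.max 0 a2 ^+ 2.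
Proof.
move=> /andP[t0 t1] a_le.
set b1 := Num.max 0 a1; set b2 := Num.max 0 a2; set b := Num.max 0 a.
have b10 : 0 <= b1 by rewrite le_max lexx.
have b20 : 0 <= b2 by rewrite le_max lexx.
have b0 : 0 <= b by rewrite le_max lexx.
have ab1 : a1 <= b1 by rewrite le_max lexx orbT.
have ab2 : a2 <= b2 by rewrite le_max lexx orbT.
have b_le : b <= t * b1 + (1 - t) * b2.
  by rewrite ge_max; apply/andP; split; [nra | apply: (le_trans a_le); nra].
have : b ^+ 2 <= (t * b1 + (1 - t) * b2) ^+ 2 by rewrite ler_sqr ?nnegrE //; nra.
have : 0 <= t * (1 - t) * (b1 - b2) ^+ 2.
  by rewrite mulr_ge0 ?sqr_ge0 ?mulr_ge0 ?subr_ge0.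
nra.
Qed.

Lemma sqnorm_vplusE (m : nat) (v : 'cV[R]_m) :
  sqnorm (vplus v) = \sum_i Num.max 0 (v i ord0) ^+ 2.
Proof. by apply: eq_bigr => i _; rewrite mxE. Qed.

Lemma sqnorm_vplus_ge0 (m : nat) (v : 'cV[R]_m) : 0 <= sqnorm (vplus v).
Proof. by rewrite sqnorm_vplusE; apply: sumr_ge0 => i _; exact: sqr_ge0. Qed.

Lemma sqnorm_vplus_eq0 (m : nat) (v : 'cV[R]_m) :
  sqnorm (vplus v) = 0 <-> forall i, v i ord0 <= 0.
Proof.
rewrite sqnorm_vplusE; split => [/eqP|v_le0]; last first.
  by rewrite big1 // => i _; rewrite max_l // expr0n.
rewrite psumr_eq0 => [/allP v0 i|i _]; last exact: sqr_ge0.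
move: (v0 i (mem_index_enum i)); rewrite sqrf_eq0 => /eqP vi.
by rewrite -vi le_max lexx orbT.
Qed.

Lemma convex_sqnorm_vplus (k m : nat) (g : 'cV[R]_k -> 'cV[R]_m) :
  convex_components g -> convex_fun (fun x => sqnorm (vplus (g x))).
Proof.
move=> cvx_g x1 x2 t t01; rewrite !sqnorm_vplusE !mulr_sumr -big_split.
by apply: ler_sum => i _; apply: sqr_max0_convex => //; exact: cvx_g.
Qed.

Lemma differentiable_sqnorm_vplus (k m : nat) (g : 'cV[R]_k -> 'cV[R]_m)
    (x : 'cV[R]_k) :
  differentiable g x -> differentiable (fun y => sqnorm (vplus (g y))) x.
Proof.
move=> dg.
have -> : (fun y => sqnorm (vplus (g y)))
    = \sum_(i < m) (fun y => Num.max 0 (g y i ord0) ^+ 2).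
  by rewrite fct_sumE; apply/funext => y; rewrite sqnorm_vplusE.
apply: differentiable_sum => i.
apply: (differentiable_comp (g := fun u : R => Num.max 0 u ^+ 2)).
  exact: differentiable_component.
exact: differentiable_sqr_max0.
Qed.

Lemma min_eq0 (a b : R) : Num.min a b = 0 -> 0 <= b /\ a * b = 0.
Proof. by have [|/ltW] := leP a b => ? ?; subst; rewrite ?mul0r ?mulr0. Qed.

Lemma kkt_multiplier_vdot_le0 (k p : nat) (h : 'cV[R]_k -> 'cV[R]_p)
    (x z : 'cV[R]_k) (w : 'cV[R]_p) :
  convex_components h -> differentiable h x -> compl0 (- h x) w ->
  (forall j, h z j ord0 <= 0) ->
  vdot (tjac h x *m w) (z - x) <= 0.
Proof.
move=> cvx_h dh compl hz; rewrite vdot_tjac; apply: sumr_le0 => j _.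
have [wj0] := min_eq0 (compl j); rewrite mxE => compl_j.
have := convex_fun_diff_le z (cvx_h j) (differentiable_component j dh).
have := hz j; nra.
Qed.

Lemma feas_kkt_grad_vdot_ge0 (N : nat) (n_ p_ : 'I_N -> nat) (m : nat)
    (g : 'cV[R]_(\sum_(nu < N) n_ nu) -> 'cV[R]_m)
    (h : forall nu : 'I_N, 'cV[R]_(n_ nu) -> 'cV[R]_(p_ nu))
    (xb y : 'cV[R]_(\sum_(nu < N) n_ nu)) :
  (forall nu, convex_components (h nu)) ->
  (forall nu, differentiable (h nu) (blk xb nu)) ->
  (forall nu j, h nu (blk y nu) j ord0 <= 0) ->
  feas_kkt g h xb ->
  0 <= vdot (grad (fun x => sqnorm (vplus (g x))) xb) (y - xb).
Proof.
move=> cvx_h dh hy kkt; rewrite vdot_blk; apply: sumr_ge0 => nu _.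
have [w [/eqP stat compl]] := kkt nu.
move: stat; rewrite addr_eq0 => /eqP ->; rewrite /blk submxcolB -/(blk y nu) -/(blk xb nu).
by rewrite vdotNl oppr_ge0; apply: kkt_multiplier_vdot_le0.
Qed.

End FeasibilityGNEP.

Theorem theorem4p4 (R : realType) (N : nat) (n_ p_ : 'I_N -> nat) (m : nat)
  (g : 'cV[R]_(\sum_(nu < N) n_ nu) -> 'cV[R]_m)
  (h : forall nu : 'I_N, 'cV[R]_(n_ nu) -> 'cV[R]_(p_ nu))
  (xb : 'cV[R]_(\sum_(nu < N) n_ nu)) :
  C1 g -> convex_components g ->
  (forall nu, C1 (h nu)) -> (forall nu, convex_components (h nu)) ->
  (exists x, gnep_feasible g h x) ->
  feas_kkt g h xb ->
  forall i : 'I_m, g xb i ord0 <= 0.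
Proof.
move=> [dg _] cvx_g C1h cvx_h [y [gy hy]] kkt.
apply/sqnorm_vplus_eq0/eqP; rewrite eq_le sqnorm_vplus_ge0 andbT.
have dh nu : differentiable (h nu) (blk xb nu) by exact: (C1h nu).1.
have grad_ge0 := feas_kkt_grad_vdot_ge0 cvx_h dh hy kkt.
have := convex_fun_diff_le y (convex_sqnorm_vplus cvx_g)
  (differentiable_sqnorm_vplus (dg xb)).
rewrite (sqnorm_vplus_eq0 _).2 // diff_vdot_grad sub0r.
by move=> /(le_trans grad_ge0); rewrite oppr_ge0.
Qed.
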